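(* A lattice $L$ is isomorphic to a lattice of equational theories if and only if $L$ is isomorphic to the congruence lattice of a finite dimensional clone algebra (of some type).
   Context: A lattice of equational theories is a lattice of the form $L(T)$: the set of all equational theories (of some fixed type) containing a given equational theory $T$, ordered by inclusion. A clone $\tau$-algebra is an algebra $\mathbf C=(C,\sigma^{\mathbf C}\ (\sigma\in\tau),q_n^{\mathbf C}\ (n\ge0),\mathsf e_i^{\mathbf C}\ (i\ge1))$ with $\mathsf e_i$ nullary, $q_n$ of arity $n+1$, satisfying: (C1) $q_n(\mathsf e_i,x_1,\dots,x_n)=x_i$ ($1\le i\le n$); (C2) $q_n(\mathsf e_j,x_1,\dots,x_n)=\mathsf e_j$ ($j>n$); (C3) $q_n(x,\mathsf e_1,\dots,\mathsf e_n)=x$; (C4) $q_k(x,y_1,\dots,y_k)=q_n(x,y_1,\dots,y_k,\mathsf e_{k+1},\dots,\mathsf e_n)$ ($n>k$); (C5) $q_n(q_n(x,\mathbf y),\mathbf z)=q_n(x,q_n(y_1,\mathbf z),\dots,q_n(y_n,\mathbf z))$ with $\mathbf y,\mathbf z$ of length $n$; (C6) $q_n(\sigma(x_1,\dots,x_k),\mathbf y)=\sigma(q_n(x_1,\mathbf y),\dots,q_n(x_k,\mathbf y))$ for $\sigma\in\tau$ of arity $k$. A clone algebra is a clone $\tau$-algebra for some type $\tau$. An element $a$ is independent of $\mathsf e_n$ if $q_n(a,\mathsf e_1,\dots,\mathsf e_{n-1},\mathsf e_{n+1})=a$; the clone algebra is finite dimensional if each element is dependent on only finitely many $\mathsf e_n$.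 *)

From mathcomp Require Import all_boot all_order.
Set Implicit Arguments. Unset Strict Implicit. Unset Printing Implicit Defensive.

Definition incl_rel (X : Type) (R S : X -> X -> Prop) : Prop :=
  forall a b, R a b -> S a b.

(* For
   lattices, order isomorphisms are exactly lattice isomorphisms. *)
Definition iso_to_relset (d : Order.disp_t) (L : latticeType d) (X : Type)
    (P : (X -> X -> Prop) -> Prop) : Prop :=
  exists f : L -> X -> X -> Prop,
    [/\ forall x, P (f x),
        forall R, P R -> exists x, forall a b, f x a b <-> R a b
      & forall x y, (x <= y)%O <-> incl_rel (f x) (f y)].

Inductive term (sym : Type) (ar : sym -> nat) : Type :=
  | Var : nat -> term ar
  | App : forall s : sym, ('I_(ar s) -> term ar) -> term ar.
Arguments Var {sym ar}.
Arguments App {sym ar} s _.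

Fixpoint subst (sym : Type) (ar : sym -> nat) (sg : nat -> term ar)
    (t : term ar) : term ar :=
  match t with
  | Var n => sg n
  | App s ts => App s (fun i => subst sg (ts i))
  end.

(* An equational theory = a set of identities closed under equational
   deduction = a fully invariant congruence of the term algebra. *)
Definition equational_theory (sym : Type) (ar : sym -> nat)
    (T : term ar -> term ar -> Prop) : Prop :=
  [/\ forall t, T t t,
      forall t u, T t u -> T u t,
      forall t u v, T t u -> T u v -> T t v,
      forall s (ts us : 'I_(ar s) -> term ar),
        (forall i, T (ts i) (us i)) -> T (App s ts) (App s us)
    & forall sg t u, T t u -> T (subst sg t) (subst sg u)].

(* Carrier C; op s : C^(ar s) -> C; q n : C -> C^n -> C (arity n+1);
   e i is e_i for i >= 1 (the value e 0 is never used).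
   Argument vectors x_1..x_n are functions 'I_n -> C, x_(i+1) = y i. *)

Definition pad (C : Type) (k n : nat) (y : 'I_k -> C) (dflt : nat -> C)
    : 'I_n -> C :=
  fun i => if @insub nat (fun m => m < k) 'I_k (nat_of_ord i) is Some j
           then y j else dflt i.

Definition is_clone_alg (sym : Type) (ar : sym -> nat) (C : Type)
    (op : forall s : sym, ('I_(ar s) -> C) -> C)
    (q : forall n : nat, C -> ('I_n -> C) -> C) (e : nat -> C) : Prop :=
  (forall n (i : 'I_n) (y : 'I_n -> C), q n (e i.+1) y = y i) /\
  (forall n j (y : 'I_n -> C), n < j -> q n (e j) y = e j) /\
  (forall n x, q n x (fun i : 'I_n => e i.+1) = x) /\
  (forall k n x (y : 'I_k -> C), k < n ->
                 q k x y = q n x (@pad C k n y (fun m => e m.+1))) /\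
  (forall n x (y z : 'I_n -> C),
                 q n (q n x y) z = q n x (fun i => q n (y i) z)) /\
  (forall s n (xs : 'I_(ar s) -> C) (y : 'I_n -> C),
                 q n (op s xs) y = op s (fun j => q n (xs j) y)).

Definition indep_of (C : Type) (q : forall n : nat, C -> ('I_n -> C) -> C)
    (e : nat -> C) (a : C) (n : nat) : Prop :=
  q n a (fun i : 'I_n => if i.+1 == n then e n.+1 else e i.+1) = a.

Definition finite_dimensional (C : Type)
    (q : forall n : nat, C -> ('I_n -> C) -> C) (e : nat -> C) : Prop :=
  forall a : C, exists N : nat,
    forall n, 1 <= n -> ~ indep_of q e a n -> n <= N.

(* congruences of the clone algebra (compatibility with the nullary e_i is
   automatic) *)
Definition is_congruence (sym : Type) (ar : sym -> nat) (C : Type)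
    (op : forall s : sym, ('I_(ar s) -> C) -> C)
    (q : forall n : nat, C -> ('I_n -> C) -> C) (R : C -> C -> Prop) : Prop :=
  [/\ forall a, R a a,
      forall a b, R a b -> R b a,
      forall a b c, R a b -> R b c -> R a c,
      forall s (xs ys : 'I_(ar s) -> C),
        (forall i, R (xs i) (ys i)) -> R (op s xs) (op s ys)
    & forall n x x' (y y' : 'I_n -> C), R x x' ->
        (forall i, R (y i) (y' i)) -> R (q n x y) (q n x' y')].

From mathcomp Require Import all_boot all_order zify.
From Stdlib Require Import FunctionalExtensionality ProofIrrelevance.
From Stdlib Require Import PropExtensionality ClassicalEpsilon Classical.
From Stdlib Require Import RelationClasses.
Set Implicit Arguments. Unset Strict Implicit. Unset Printing Implicit Defensive.

(* Terms write [Var n] for the variable x_(n+1), which plays the role of e_(n+1).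

   (=>) The terms modulo an equational theory T form a clone algebra in which
   q_n substitutes its last n arguments for x_1, ..., x_n and e_i is x_i.  A
   term mentions finitely many variables, so this algebra is finite
   dimensional, and its congruences correspond to the theories containing T.

   (<=) In a finite-dimensional clone algebra C choose for every a a bound
   N a such that a is independent of all e_n with n > N a.  Take one operation
   symbol of arity N a for each a, interpreted as q_(N a)(a, -).  For such an
   a the identity q_M(q_k(a, y), s) = q_k(a, q_M(y_1, s), ..., q_M(y_k, s))
   holds for every M, so evaluation of terms commutes with substitution.
   Hence a congruence of C pulls back along evaluation to a theory containing
   the kernel T0 of evaluation, and conversely a theory containing T0 is
   recovered from its restriction to the terms a(x_1, ..., x_(N a)). *)

Lemma iso_to_relset_transfer d (L : latticeType d) (X Y : Type)
    (P : (X -> X -> Prop) -> Prop) (Q : (Y -> Y -> Prop) -> Prop)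
    (F : (X -> X -> Prop) -> Y -> Y -> Prop) :
  (forall R, P R -> Q (F R)) ->
  (forall S, Q S -> exists R, P R /\ forall a b, F R a b <-> S a b) ->
  (forall R R', P R -> P R' -> incl_rel R R' <-> incl_rel (F R) (F R')) ->
  (forall R R', (forall a b, R a b <-> R' a b) -> forall a b, F R a b <-> F R' a b) ->
  iso_to_relset L P -> iso_to_relset L Q.
Proof.
move=> FPQ F_onto F_mono F_ext [f [Pf f_onto f_mono]].
exists (fun x => F (f x)); split.
- by move=> x; apply: FPQ.
- move=> S /F_onto [R [PR FRS]]; have [x fxR] := f_onto R PR.
  by exists x => a b; rewrite -FRS; apply: F_ext.
- by move=> x y; rewrite f_mono; apply: F_mono.
Qed.

Lemma equiv_iff_related (A : Type) (E : A -> A -> Prop) (f : A -> A) :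
  Equivalence E -> (forall a, E (f a) a) -> forall a b, E a b <-> E (f a) (f b).
Proof.
move=> E_equiv Ef a b; split=> Eab.
- exact: transitivity (Ef a) (transitivity Eab (symmetry (Ef b))).
- exact: transitivity (symmetry (Ef a)) (transitivity Eab (Ef b)).
Qed.

Definition extend_vec (A : Type) (n : nat) (ys : 'I_n -> A) (d : nat -> A)
    (m : nat) : A :=
  if @insub nat (fun m => m < n) 'I_n m is Some j then ys j else d m.

Lemma extend_vec_lt A n (ys : 'I_n -> A) d m (lt_mn : m < n) :
  extend_vec ys d m = ys (Ordinal lt_mn).
Proof. by rewrite /extend_vec insubT. Qed.

Lemma extend_vec_ge A n (ys : 'I_n -> A) d m :
  n <= m -> extend_vec ys d m = d m.
Proof. by move=> le_nm; rewrite /extend_vec insubN // -leqNgt. Qed.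

Lemma pad_extend_vec A k n (y : 'I_k -> A) d (i : 'I_n) :
  pad y d i = extend_vec y d i.
Proof. by []. Qed.

Section Quotient.
Context (A : Type) (E : A -> A -> Prop) {E_equiv : Equivalence E}.

Definition quot := {P : A -> Prop | exists a, P = E a}.

Definition cls (a : A) : quot := exist _ (E a) (ex_intro _ a erefl).

Definition rep (x : quot) : A :=
  proj1_sig (constructive_indefinite_description _ (proj2_sig x)).

Lemma cls_eq a b : E a b -> cls a = cls b.
Proof.
move=> Eab; apply: subset_eq_compat; apply: functional_extensionality => c.
apply: propositional_extensionality; split=> [Eac|Ebc].
  exact: transitivity (symmetry Eab) Eac.
exact: transitivity Eab Ebc.
Qed.

Lemma repK : cancel rep cls.
Proof.
case=> P P_cls; apply: subset_eq_compat; rewrite /rep /=.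
by case: constructive_indefinite_description.
Qed.

Lemma rep_cls a : E (rep (cls a)) a.
Proof.
by rewrite /rep; case: constructive_indefinite_description => b /= <-; reflexivity.
Qed.

Lemma cls_rep_vec n (y : 'I_n -> quot) : (fun i => cls (rep (y i))) = y.
Proof. by apply: functional_extensionality => i; apply: repK. Qed.

End Quotient.

Section Terms.
Variables (sym : Type) (ar : sym -> nat).
Implicit Types (t u : term ar) (sg : nat -> term ar).

Fixpoint var_bound t : nat :=
  match t with Var n => n.+1 | App s ts => \max_(i < ar s) var_bound (ts i) end.

Lemma var_bound_App s (ts : 'I_(ar s) -> term ar) i :
  var_bound (ts i) <= var_bound (App s ts).
Proof. exact: leq_bigmax. Qed.

Lemma subst_rel_congr (R : term ar -> term ar -> Prop) :
  (forall t, R t t) ->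
  (forall s (ts us : 'I_(ar s) -> term ar),
      (forall i, R (ts i) (us i)) -> R (App s ts) (App s us)) ->
  forall t sg sg', (forall m, m < var_bound t -> R (sg m) (sg' m)) ->
    R (subst sg t) (subst sg' t).
Proof.
move=> Rrefl RApp; elim=> [n|s ts IH] sg sg' Rsg /=; first exact: Rsg.
apply: RApp => i; apply: IH => m lt_m; apply: Rsg.
exact: leq_trans lt_m (var_bound_App ts i).
Qed.

Lemma eq_subst t sg sg' :
  (forall m, m < var_bound t -> sg m = sg' m) -> subst sg t = subst sg' t.
Proof.
apply: (@subst_rel_congr eq) => // s ts us eq_tus.
by congr App; apply: functional_extensionality.
Qed.

Lemma subst_Var t : subst Var t = t.
Proof.
by elim: t => //= s ts IH; congr App; apply: functional_extensionality.
Qed.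

Lemma subst_comp sg sg' t :
  subst sg (subst sg' t) = subst (fun m => subst sg (sg' m)) t.
Proof.
by elim: t => //= s ts IH; congr App; apply: functional_extensionality.
Qed.

Definition vsubst n (ys : 'I_n -> term ar) : nat -> term ar :=
  extend_vec ys Var.

Lemma vsubst_Var n : vsubst (fun i : 'I_n => Var i) = Var.
Proof.
apply: functional_extensionality => m; rewrite /vsubst.
by case: (ltnP m n) => [lt_mn|le_nm]; rewrite ?(extend_vec_lt _ _ lt_mn) ?extend_vec_ge.
Qed.

Section Theory.
Variable T : term ar -> term ar -> Prop.
Hypothesis T_theory : equational_theory T.

Lemma theory_refl t : T t t.
Proof. by case: T_theory. Qed.

Lemma theory_sym t u : T t u -> T u t.
Proof. by case: T_theory => _ Tsym _ _ _; apply: Tsym. Qed.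

Lemma theory_trans t u v : T t u -> T u v -> T t v.
Proof. by case: T_theory => _ _ Ttrans _ _; apply: Ttrans. Qed.

Lemma theory_equivalence : Equivalence T.
Proof. by split; [exact: theory_refl | exact: theory_sym | exact: theory_trans]. Qed.

Lemma theory_App s (ts us : 'I_(ar s) -> term ar) :
  (forall i, T (ts i) (us i)) -> T (App s ts) (App s us).
Proof. by case: T_theory => _ _ _ TApp _; apply: TApp. Qed.

Lemma theory_subst sg t u : T t u -> T (subst sg t) (subst sg u).
Proof. by case: T_theory => _ _ _ _ Tsubst; apply: Tsubst. Qed.

Lemma theory_vsubst_congr n t (ys ys' : 'I_n -> term ar) :
  (forall i, T (ys i) (ys' i)) -> T (subst (vsubst ys) t) (subst (vsubst ys') t).
Proof.
move=> Tys; apply: subst_rel_congr => [v|s ts us|m _]; first exact: theory_refl.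
  exact: theory_App.
rewrite /vsubst; case: (ltnP m n) => [lt_mn|le_nm].
  by rewrite !(extend_vec_lt _ _ lt_mn).
by rewrite !extend_vec_ge //; apply: theory_refl.
Qed.

End Theory.
End Terms.

Section CloneAlgebra.
Variables (sym : Type) (ar : sym -> nat) (C : Type)
  (op : forall s : sym, ('I_(ar s) -> C) -> C)
  (q : forall n : nat, C -> ('I_n -> C) -> C) (e : nat -> C).
Arguments op : clear implicits.
Arguments q : clear implicits.
Hypothesis C_clone : is_clone_alg op q e.

Lemma q_e_proj n (i : 'I_n) (y : 'I_n -> C) : q n (e i.+1) y = y i.
Proof. by case: C_clone => C1 _; apply: C1. Qed.

Lemma q_e_out n j (y : 'I_n -> C) : n < j -> q n (e j) y = e j.
Proof. by case: C_clone => _ [C2 _]; apply: C2. Qed.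

Lemma q_e_id n x : q n x (fun i : 'I_n => e i.+1) = x.
Proof. by case: C_clone => _ [_ [C3 _]]; apply: C3. Qed.

Lemma q_comp n x (y z : 'I_n -> C) :
  q n (q n x y) z = q n x (fun i => q n (y i) z).
Proof. by case: C_clone => _ [_ [_ [_ [C5 _]]]]; apply: C5. Qed.

Lemma q_op s n (xs : 'I_(ar s) -> C) (y : 'I_n -> C) :
  q n (op s xs) y = op s (fun j => q n (xs j) y).
Proof. by case: C_clone => _ [_ [_ [_ [_ C6]]]]; apply: C6. Qed.

Lemma q_pad k n x (y : 'I_k -> C) :
  k <= n -> q k x y = q n x (pad y (fun m => e m.+1)).
Proof.
have [_ [_ [_ [C4 _]]]] := C_clone.
rewrite leq_eqVlt => /orP [/eqP eq_kn|]; last exact: C4.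
subst n; congr (q k x _); apply: functional_extensionality => i.
by rewrite pad_extend_vec (extend_vec_lt _ _ (ltn_ord i)); congr y; apply: val_inj.
Qed.

Lemma op_as_q s (xs : 'I_(ar s) -> C) :
  op s xs = q (ar s) (op s (fun i => e i.+1)) xs.
Proof.
by rewrite q_op; congr (op s _); apply: functional_extensionality => i; rewrite q_e_proj.
Qed.

Lemma indep_subst a n b : indep_of q e a n ->
  q n a (fun i : 'I_n => if i.+1 == n then b else e i.+1) = a.
Proof.
move=> a_indep; rewrite -{1}a_indep q_comp -[RHS]a_indep.
congr (q n a _); apply: functional_extensionality => i.
case: eqP => [_|ne_in]; first exact: q_e_out.
by rewrite q_e_proj; case: eqP.
Qed.

Lemma eq_congruence : is_congruence op q eq.
Proof.
split=> //; first by move=> ? ? ? -> ->.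
- by move=> s xs ys eq_xys; congr (op s _); apply: functional_extensionality.
- by move=> n x x' y y' <- eq_y; congr (q n x _); apply: functional_extensionality.
Qed.

Section LowDimension.
Variables (k : nat) (a : C).
Hypothesis a_low : forall n, k < n -> indep_of q e a n.

(* Both sides equal the value with [e_(M+1)] at position [j], where [e_(M+1)]
   is fixed by every [q_M]. *)
Lemma q_update M (w : 'I_M -> C) j c : k <= j < M ->
  q M a w = q M a (fun i => if val i == j then c else w i).
Proof.
case/andP=> le_kj lt_jM.
have to_out b : q M a (fun i => if val i == j then b else w i)
              = q M a (fun i => if val i == j then e M.+1 else w i).
  have := indep_subst (e M.+1) (@a_low j.+1 le_kj).
  rewrite (q_pad _ _ lt_jM) => a_out; rewrite -{1}a_out q_comp.
  congr (q M a _); apply: functional_extensionality => i.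
  rewrite pad_extend_vec; case: (ltnP i j.+1) => [lt_ij|le_ji].
    rewrite (extend_vec_lt _ _ lt_ij) /= eqSS.
    case: eqP => [_|ne_ij]; first exact: q_e_out.
    by rewrite q_e_proj /=; case: eqP.
  rewrite extend_vec_ge // q_e_proj.
  by case: eqP => // eq_ij; move: le_ji; rewrite -eq_ij ltnn.
rewrite to_out -(to_out (w (Ordinal lt_jM))); congr (q M a _).
by apply: functional_extensionality => i; case: eqP => // eq_ij; congr w; apply: val_inj.
Qed.

Lemma q_agree M (w w' : 'I_M -> C) :
  (forall i : 'I_M, i < k -> w i = w' i) -> q M a w = q M a w'.
Proof.
move=> eq_low; pose mix p (i : 'I_M) := if k <= i < p then w' i else w i.
have mixP p : p <= M -> q M a w = q M a (mix p).
  elim: p => [|p IH] le_pM.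
    by congr (q M a _); apply: functional_extensionality => i; rewrite /mix andbF.
  rewrite IH 1?ltnW //; case: (leqP k p) => [le_kp|lt_pk].
    rewrite (@q_update M _ p (w' (Ordinal le_pM))) ?le_kp //.
    congr (q M a _); apply: functional_extensionality => i; rewrite /mix.
    case: eqP => [eq_ip|ne_ip].
      by rewrite eq_ip le_kp ltnSn; congr w'; apply: val_inj.
    by have -> : (k <= i < p.+1) = (k <= i < p) by move: ne_ip => /= ne_ip; lia.
  congr (q M a _); apply: functional_extensionality => i; rewrite /mix.
  by have -> : (k <= i < p.+1) = (k <= i < p) by lia.
rewrite (mixP M (leqnn M)); congr (q M a _); apply: functional_extensionality => i.
by rewrite /mix ltn_ord andbT; case: leqP => // /eq_low.
Qed.

Lemma q_comp_low M (y : 'I_k -> C) (s : 'I_M -> C) :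
  q M (q k a y) s = q k a (fun i => q M (y i) s).
Proof.
case: (ltnP M k) => [lt_Mk|le_kM].
- rewrite (q_pad _ _ (ltnW lt_Mk)) q_comp; congr (q k a _).
  by apply: functional_extensionality => i; rewrite (q_pad _ _ (ltnW lt_Mk)).
- rewrite (q_pad _ _ le_kM) q_comp (q_pad _ _ le_kM); apply: q_agree => i lt_ik.
  by rewrite !pad_extend_vec !(extend_vec_lt _ _ lt_ik).
Qed.

End LowDimension.

Lemma finite_dimensional_bound : finite_dimensional q e ->
  exists N : C -> nat, forall a n, N a < n -> indep_of q e a n.
Proof.
move=> C_fd; have /choice [N N_bound] := C_fd.
exists N => a n lt_n; apply: NNPP => dep_n.
by have := N_bound a n (leq_ltn_trans (leq0n _) lt_n) dep_n; rewrite leqNgt lt_n.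
Qed.

Section ElementTerms.
Variable N : C -> nat.
Hypothesis N_dim : forall a n, N a < n -> indep_of q e a n.

Fixpoint eval (t : term N) : C :=
  match t with
  | Var n => e n.+1
  | App a ts => q (N a) a (fun i => eval (ts i))
  end.

Definition elem_term (a : C) : term N := App a (fun i : 'I_(N a) => Var i).

Lemma eval_elem_term a : eval (elem_term a) = a.
Proof. exact: q_e_id. Qed.

Lemma var_bound_elem_term a : var_bound (elem_term a) <= N a.
Proof. by apply/bigmax_leqP. Qed.

Lemma eval_subst (t : term N) M sg : var_bound t <= M ->
  eval (subst sg t) = q M (eval t) (fun i : 'I_M => eval (sg i)).
Proof.
elim: t sg => [n|a ts IH] sg /= le_tM; first by rewrite (q_e_proj (Ordinal le_tM)).
rewrite (q_comp_low (@N_dim a)); congr (q _ a _); apply: functional_extensionality => i.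
by apply: IH; apply: leq_trans (var_bound_App ts i) le_tM.
Qed.

Lemma eval_vsubst_elem_term n x (z : 'I_n -> C) :
  eval (subst (vsubst (fun i => elem_term (z i))) (elem_term x)) = q n x z.
Proof.
have le_x := leq_trans (var_bound_elem_term x) (leq_maxr n (N x)).
rewrite (eval_subst _ le_x) (q_pad _ _ (leq_maxl n (N x))) eval_elem_term.
congr (q _ x _); apply: functional_extensionality => i; rewrite pad_extend_vec /vsubst.
case: (ltnP i n) => [lt_in|le_ni]; last by rewrite !extend_vec_ge.
by rewrite !(extend_vec_lt _ _ lt_in) eval_elem_term.
Qed.

Definition eval_rel (R : C -> C -> Prop) : term N -> term N -> Prop :=
  fun t u => R (eval t) (eval u).

Definition elem_rel (E : term N -> term N -> Prop) : C -> C -> Prop :=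
  fun a b => E (elem_term a) (elem_term b).

Lemma eval_rel_theory R : is_congruence op q R -> equational_theory (eval_rel R).
Proof.
case=> Rrefl Rsym Rtrans _ Rq; split; rewrite /eval_rel //.
- by move=> ? ?; apply: Rsym.
- by move=> ? ? ?; apply: Rtrans.
- by move=> a ts us Rtus /=; apply: Rq.
move=> sg t u Rtu; pose M := maxn (var_bound t) (var_bound u).
rewrite (eval_subst _ (leq_maxl _ _ : _ <= M)) (eval_subst _ (leq_maxr _ _ : _ <= M)).
exact: Rq.
Qed.

Lemma eval_rel_incl R R' :
  incl_rel R R' <-> incl_rel (eval_rel R) (eval_rel R').
Proof.
split=> RR' x y; first exact: RR'.
by have := RR' (elem_term x) (elem_term y); rewrite /eval_rel !eval_elem_term.
Qed.

Section OverKernel.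
Variable E : term N -> term N -> Prop.
Hypotheses (E_theory : equational_theory E) (E_ker : incl_rel (eval_rel eq) E).

Lemma theory_elem_term_eval t : E t (elem_term (eval t)).
Proof. by apply: E_ker; rewrite /eval_rel eval_elem_term. Qed.

Lemma elem_rel_q n x x' (y y' : 'I_n -> C) : elem_rel E x x' ->
  (forall i, elem_rel E (y i) (y' i)) -> elem_rel E (q n x y) (q n x' y').
Proof.
move=> Ex Ey; pose sub (z : 'I_n -> C) := vsubst (fun i => elem_term (z i)).
have E_sub x0 z : E (subst (sub z) (elem_term x0)) (elem_term (q n x0 z)).
  have := theory_elem_term_eval (subst (sub z) (elem_term x0)).
  by rewrite eval_vsubst_elem_term.
apply: (theory_trans E_theory (theory_sym E_theory (E_sub x y))).
apply: (theory_trans E_theory (theory_subst E_theory (sub y) Ex)).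
apply: (theory_trans E_theory (theory_vsubst_congr E_theory _ Ey)).
exact: E_sub.
Qed.

Lemma elem_rel_congruence : is_congruence op q (elem_rel E).
Proof.
split; rewrite /elem_rel.
- by move=> a; apply: theory_refl.
- by move=> ? ?; apply: theory_sym.
- by move=> ? ? ?; apply: theory_trans.
- move=> s xs ys Exy; rewrite (op_as_q xs) (op_as_q ys).
  by apply: elem_rel_q => //; apply: theory_refl.
- exact: elem_rel_q.
Qed.

Lemma eval_rel_elem_rel t u : eval_rel (elem_rel E) t u <-> E t u.
Proof.
apply: iff_sym; apply: (equiv_iff_related (f := fun v => elem_term (eval v))).
  exact: theory_equivalence.
by move=> v; apply: (theory_sym E_theory); apply: theory_elem_term_eval.
Qed.

End OverKernel.

Lemma congruence_iso_theory_iso d (L : latticeType d) :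
  iso_to_relset L (is_congruence op q) ->
  iso_to_relset L (fun E => equational_theory E /\ incl_rel (eval_rel eq) E).
Proof.
apply: (iso_to_relset_transfer (F := eval_rel)).
- move=> R R_cong; split; first exact: eval_rel_theory.
  by move=> t u; rewrite /eval_rel => ->; case: R_cong.
- move=> E [E_theory E_ker]; exists (elem_rel E); split.
    exact: elem_rel_congruence.
  exact: eval_rel_elem_rel.
- by move=> R R' _ _; apply: eval_rel_incl.
- by move=> R R' RR' a b; apply: RR'.
Qed.

End ElementTerms.
End CloneAlgebra.

Section TermClone.
Variables (sym : Type) (ar : sym -> nat) (T : term ar -> term ar -> Prop).
Hypothesis T_theory : equational_theory T.

#[local] Instance T_equivalence : Equivalence T := theory_equivalence T_theory.

Definition term_clone := quot T.
Notation cls := (@cls _ T).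

Definition term_clone_op s (xs : 'I_(ar s) -> term_clone) : term_clone :=
  cls (App s (fun i => rep (xs i))).

Definition term_clone_q n (x : term_clone) (y : 'I_n -> term_clone) : term_clone :=
  cls (subst (vsubst (fun i => rep (y i))) (rep x)).

Definition term_clone_e (i : nat) : term_clone := cls (Var i.-1).

Lemma term_clone_opE s ts :
  @term_clone_op s (fun i => cls (ts i)) = cls (App s ts).
Proof. by apply: cls_eq; apply: theory_App => // i; apply: rep_cls. Qed.

Lemma term_clone_qE n t (ys : 'I_n -> term ar) :
  term_clone_q (cls t) (fun i => cls (ys i)) = cls (subst (vsubst ys) t).
Proof.
have T_ys i : T (rep (cls (ys i))) (ys i) by apply: rep_cls.
apply: cls_eq; apply: (theory_trans T_theory (theory_vsubst_congr T_theory _ T_ys)).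
by apply: theory_subst => //; apply: rep_cls.
Qed.

Lemma term_clone_is_clone_alg : is_clone_alg term_clone_op term_clone_q term_clone_e.
Proof.
have qE := term_clone_qE.
have qE_vec m (y : 'I_m -> term_clone) n (z : 'I_n -> term_clone) :
    (fun i => term_clone_q (y i) (fun j => cls (rep (z j))))
  = (fun i => cls (subst (vsubst (fun j => rep (z j))) (rep (y i)))).
  by apply: functional_extensionality => i; rewrite -{1}(repK (y i)) qE.
split; [|split; [|split; [|split; [|split]]]].
- move=> n i y; rewrite -(cls_rep_vec y) qE /= /vsubst.
  by rewrite (extend_vec_lt _ _ (ltn_ord i)); congr (cls (rep (y _))); apply: val_inj.
- move=> n j y lt_nj; rewrite -(cls_rep_vec y) qE /= /vsubst.
  by rewrite extend_vec_ge //; lia.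
- by move=> n x; rewrite -(repK x) /term_clone_e qE vsubst_Var subst_Var.
- move=> k n x y lt_kn; rewrite -(repK x) -(cls_rep_vec y).
  have -> : @pad _ k n (fun i => cls (rep (y i))) (fun m => term_clone_e m.+1)
          = (fun i => cls (@pad _ k n (fun i => rep (y i)) Var i)).
    apply: functional_extensionality => i; rewrite !pad_extend_vec.
    by case: (ltnP i k) => [lt_ik|le_ki]; rewrite ?(extend_vec_lt _ _ lt_ik) ?extend_vec_ge.
  rewrite !qE; congr (cls (subst _ _)); apply: functional_extensionality => m.
  rewrite /vsubst; case: (ltnP m n) => [lt_mn|le_nm].
    by rewrite (extend_vec_lt _ _ lt_mn) pad_extend_vec.
  by rewrite !extend_vec_ge // (leq_trans (ltnW lt_kn)).
- move=> n x y z; rewrite -(repK x) -{1}(cls_rep_vec y) -(cls_rep_vec z).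
  rewrite (qE_vec _ y _ z) !qE subst_comp; congr (cls (subst _ _)).
  apply: functional_extensionality => m.
  rewrite /vsubst; case: (ltnP m n) => [lt_mn|le_nm]; first by rewrite !extend_vec_lt.
  by rewrite !extend_vec_ge //= extend_vec_ge.
- move=> s n xs y; rewrite -{1}(cls_rep_vec xs) -(cls_rep_vec y) (qE_vec _ xs _ y).
  by rewrite !term_clone_opE qE.
Qed.

Lemma term_clone_finite_dimensional : finite_dimensional term_clone_q term_clone_e.
Proof.
move=> x; rewrite -(repK x); set t := rep x.
exists (var_bound t) => n _ dep_n; rewrite leqNgt; apply/negP => lt_tn; apply: dep_n.
rewrite /indep_of /term_clone_e.
have -> : (fun i : 'I_n => if i.+1 == n then cls (Var n.+1.-1) else cls (Var i.+1.-1))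
        = (fun i : 'I_n => cls (if i.+1 == n then Var n else Var i)).
  by apply: functional_extensionality => i; case: ifP.
rewrite term_clone_qE; congr cls; rewrite -[RHS](subst_Var t); apply: eq_subst => m lt_mt.
have lt_mn : m < n by lia.
by rewrite /vsubst (extend_vec_lt _ _ lt_mn) /=; case: eqP => //; lia.
Qed.

Lemma term_clone_subst sg t M : var_bound t <= M ->
  cls (subst sg t) = term_clone_q (cls t) (fun i : 'I_M => cls (sg i)).
Proof.
move=> le_tM; rewrite term_clone_qE; congr cls; apply: eq_subst => m lt_mt.
by rewrite /vsubst (extend_vec_lt _ _ (leq_trans lt_mt le_tM)).
Qed.

Definition rep_rel (E : term ar -> term ar -> Prop) : term_clone -> term_clone -> Prop :=
  fun x y => E (rep x) (rep y).

Definition cls_rel (R : term_clone -> term_clone -> Prop) : term ar -> term ar -> Prop :=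
  fun t u => R (cls t) (cls u).

Lemma cls_rel_theory R : is_congruence term_clone_op term_clone_q R ->
  equational_theory (cls_rel R) /\ incl_rel T (cls_rel R).
Proof.
case=> Rrefl Rsym Rtrans Rop Rq; split; last first.
  by move=> t u Ttu; rewrite /cls_rel (cls_eq Ttu).
split; rewrite /cls_rel //.
- by move=> ? ?; apply: Rsym.
- by move=> ? ? ?; apply: Rtrans.
- by move=> s ts us Rtus; rewrite -!term_clone_opE; apply: Rop.
move=> sg t u Rtu; pose M := maxn (var_bound t) (var_bound u).
rewrite (@term_clone_subst sg t M) ?leq_maxl // (@term_clone_subst sg u M) ?leq_maxr //.
exact: Rq.
Qed.

Section OverT.
Variable E : term ar -> term ar -> Prop.
Hypotheses (E_theory : equational_theory E) (T_E : incl_rel T E).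

Lemma rep_relE t u : E t u <-> rep_rel E (cls t) (cls u).
Proof.
apply: (equiv_iff_related (f := fun v => rep (cls v))); first exact: theory_equivalence.
by move=> v; apply: T_E; apply: rep_cls.
Qed.

Lemma rep_rel_congruence : is_congruence term_clone_op term_clone_q (rep_rel E).
Proof.
split; rewrite /rep_rel.
- by move=> x; apply: theory_refl.
- by move=> ? ?; apply: theory_sym.
- by move=> ? ? ?; apply: theory_trans.
- by move=> s xs ys Exy; apply: (rep_relE _ _).1; apply: (theory_App E_theory).
move=> n x x' y y' Ex Ey; apply: (rep_relE _ _).1.
apply: (theory_trans E_theory (theory_subst E_theory _ Ex)).
exact: theory_vsubst_congr.
Qed.

End OverT.

Lemma theory_iso_congruence_iso d (L : latticeType d) :
  iso_to_relset L (fun E => equational_theory E /\ incl_rel T E) ->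
  iso_to_relset L (is_congruence term_clone_op term_clone_q).
Proof.
apply: (iso_to_relset_transfer (F := rep_rel)).
- by move=> E [E_theory T_E]; apply: rep_rel_congruence.
- move=> R R_cong; exists (cls_rel R); split; first exact: cls_rel_theory.
  by move=> x y; rewrite /rep_rel /cls_rel !repK.
- move=> E E' [E_th T_E] [E'_th T_E']; split=> EE' t u; first exact: EE'.
  by rewrite (rep_relE E_th T_E) (rep_relE E'_th T_E'); apply: EE'.
- by move=> E E' EE' x y; apply: EE'.
Qed.

End TermClone.

Theorem theorem10p6 (d : Order.disp_t) (L : latticeType d) :
  (exists (sym : Type) (ar : sym -> nat) (T : term ar -> term ar -> Prop),
      equational_theory T /\
      iso_to_relset L (fun T' => equational_theory T' /\ incl_rel T T'))
  <->
  (exists (sym : Type) (ar : sym -> nat) (C : Type)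
          (op : forall s : sym, ('I_(ar s) -> C) -> C)
          (q : forall n : nat, C -> ('I_n -> C) -> C) (e : nat -> C),
      [/\ is_clone_alg op q e, finite_dimensional q e
        & iso_to_relset L (is_congruence op q)]).
Proof.
split.
- case=> sym [ar [T [T_theory T_iso]]].
  exists sym, ar, (term_clone T),
    (@term_clone_op _ _ T), (@term_clone_q _ _ T), (@term_clone_e _ _ T).
  split; first exact: term_clone_is_clone_alg.
    exact: term_clone_finite_dimensional.
  exact: theory_iso_congruence_iso.
- case=> sym [ar [C [op [q [e [C_clone C_fd C_iso]]]]]].
  have [N N_dim] := finite_dimensional_bound C_fd.
  exists C, N, (@eval_rel C q e N eq); split.
    apply: (eval_rel_theory C_clone N_dim (eq_congruence op q)).
  apply: (congruence_iso_theory_iso C_clone N_dim C_iso).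
Qed.
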